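(* Let $n$ be a composite positive integer. Then: (i) for every $a\in\,]n[=\{1,\dots,n\}$, $d_{\{a\}}(\mathbb{Z}_n)=n/\gcd(a,n)$; (ii) for every $a\in\,]n[$ with $\gcd(a,n)=1$, $d_{\{a,n-a\}}(\mathbb{Z}_n)=1+\lfloor\log_2 n\rfloor$; (iii) if $A=\{a\in\,]n[\,:\gcd(a,n)=1\}$, then $d_A(\mathbb{Z}_n)=1+\Omega(n)$, where $\Omega(n)$ is the number of prime factors of $n$ counted with multiplicity; (iv) if $A=\,]n-1[=\{1,\dots,n-1\}$, then $d_A(\mathbb{Z}_n)=2$.
   Context: For an integer $x\ge1$, $]x[=\{1,2,\dots,x\}$. Let $G$ be a finite abelian group (written additively) of exponent $n$ and let $\emptyset\ne A\subseteq\, ]n[$. The constant $d_A(G)$ is the least positive integer $t$ such that for every sequence $g_1,\dots,g_t$ of (not necessarily distinct) elements of $G$ there exist $\ell\ge1$, indices $1\le i_1<\dots<i_\ell\le t$ and elements $a_1,\dots,a_\ell\in A$ (repetitions allowed) with $\sum_{j=1}^{\ell}a_j g_{i_j}=0$ in $G$. *)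

From mathcomp Require Import all_boot all_order all_algebra.
Set Implicit Arguments. Unset Strict Implicit. Unset Printing Implicit Defensive.
Import GRing.Theory.
Local Open Scope ring_scope.

Definition oint (x : nat) : pred nat := [pred a : nat | (0 < a)%N && (a <= x)%N].

Definition has_A_zero_sum (n : nat) (A : pred nat) (s : seq 'Z_n) : Prop :=
  exists (I : {set 'I_(size s)}) (w : 'I_(size s) -> nat),
    I != set0 /\ (forall i, i \in I -> w i \in A) /\
    \sum_(i in I) (s`_i *+ w i) = 0.

Definition A_zs_property (n : nat) (A : pred nat) (t : nat) : Prop :=
  forall s : seq 'Z_n, size s = t -> has_A_zero_sum A s.

Definition is_dA (n : nat) (A : pred nat) (t : nat) : Prop :=
  (0 < t)%N /\ A_zs_property n A t /\
  (forall t', (0 < t')%N -> (t' < t)%N -> ~ A_zs_property n A t').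

Definition bigOmega (n : nat) : nat := (\sum_(p <- primes n) logn p n)%N.

From mathcomp Require Import all_boot all_order all_algebra.
From mathcomp Require Import ring.
Set Implicit Arguments. Unset Strict Implicit. Unset Printing Implicit Defensive.
Import GRing.Theory.

(* (i) The prefix sums of a x_1, ..., a x_t are multiples of g = gcd(a, n), so modulo n
   they take at most n/g values; once t = n/g two of them coincide and the block in
   between is a zero sum. The constant sequence 1 of length n/g - 1 has none, since
   n | k a forces n/g | k.
   (ii) Among the 2^t > n subsets two have the same sum modulo n; weighting their
   symmetric difference by a and n - a gives a zero sum. When 2^t <= n, a weighted zero
   sum of 1, 2, ..., 2^(t-1) would give two disjoint sets of powers of 2 with equal sums.
   (iii) Attach to a subset the parities of the number of its elements x with
   min(v_p(x), v_p(n)) = l, for the Omega(n) pairs (p, l) with l < v_p(n). Two subsets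
   with equal parities have a symmetric difference in which all these classes are even.
   Pairing elements p^l r, p^l s of equal level with weights s and (p^e - 1) r makes
   p^(v_p(n)) divide a sum with weights prime to p, and the Chinese remainder theorem
   glues the weights into units modulo n. The partial products 1, p_1, p_1 p_2, ... of
   the prime factors of n show that Omega(n) elements do not suffice.
   (iv) Nonzero x, y give the zero sum y x + (n - x) y. *)

Lemma pigeonhole (aT rT : finType) (f : aT -> rT) :
  #|rT| < #|aT| -> exists x y, x != y /\ f x = f y.
Proof.
move=> card_lt; have /injectivePn[x [y neq_xy eq_fxy]] : ~~ injectiveb f.
  by apply: contraTN card_lt => /injectiveP/leq_card; rewrite -leqNgt.
by exists x, y.
Qed.

Lemma card_sets (T : finType) : #|{: {set T}}| = 2 ^ #|T|.
Proof. by rewrite -(cardsT {set T}) -powersetT card_powerset cardsT. Qed.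

Definition symdiff (T : finType) (A B : {set T}) : {set T} := (A :\: B) :|: (B :\: A).

Section SymmetricDifference.

Variable T : finType.
Implicit Types A B C : {set T}.

Lemma symdiff_eq0 A B : (symdiff A B == set0) = (A == B).
Proof. by rewrite setU_eq0 !setD_eq0 eqEsubset. Qed.

Lemma setI_symdiff A B C : symdiff A B :&: C = symdiff (A :&: C) (B :&: C).
Proof. by apply/setP => i; rewrite !inE; case: (i \in C); rewrite ?andbT ?andbF. Qed.

Lemma disjoint_symdiff A B : [disjoint A :\: B & B :\: A].
Proof.
by rewrite -setI_eq0; apply/eqP/setP => i; rewrite !inE; case: (i \in A); rewrite /= ?andbF.
Qed.

Lemma odd_card_symdiff A B : odd #|symdiff A B| = odd #|A| (+) odd #|B|.
Proof.
rewrite cardsU (disjoint_setI0 (disjoint_symdiff A B)) cards0 subn0.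
rewrite -(cardsID B A) -(cardsID A B) setIC !oddD.
by case: (odd #|B :&: A|); rewrite ?addbF // addbACA addTb.
Qed.

Lemma sum_symdiff (F G : T -> nat) A B :
  \sum_(i in symdiff A B) (if i \in A then F i else G i) =
  \sum_(i in A :\: B) F i + \sum_(i in B :\: A) G i.
Proof.
rewrite (eq_bigl [predU A :\: B & B :\: A]) => [|i]; last by rewrite inE.
rewrite bigU ?disjoint_symdiff //; congr (_ + _); apply: eq_bigr => i; rewrite inE.
  by case/andP=> _ ->.
by case/andP=> /negPf->.
Qed.

End SymmetricDifference.

Section ZpWeightedSums.

Variables (n : nat) (A : pred nat).
Hypothesis n_gt1 : 1 < n.

Lemma Zp_natr_eq0 m : ((m%:R : 'Z_n) == 0)%R = (n %| m).
Proof. by rewrite -(inj_eq val_inj) /= val_Zp_nat. Qed.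

Lemma Zp_sum_natr_eq0 (T : finType) (I : {set T}) (x w : T -> nat) :
  ((\sum_(i in I) (x i)%:R *+ w i : 'Z_n) == 0)%R = (n %| \sum_(i in I) x i * w i).
Proof.
rewrite -Zp_natr_eq0 natr_sum; congr (_ == _).
by apply: eq_bigr => i _; rewrite natrM mulr_natr.
Qed.

Definition weighted_zero_sum t (x : 'I_t -> nat) : Prop :=
  exists (I : {set 'I_t}) (w : 'I_t -> nat),
    [/\ I != set0, {in I, forall i, w i \in A} & n %| \sum_(i in I) x i * w i].

Lemma zs_property_nat t :
  (forall x : 'I_t -> nat, (forall i, x i < n) -> weighted_zero_sum x) ->
  A_zs_property n A t.
Proof.
move=> zs s size_s; subst t.
have [|I [w [I_n0 wA dvd_sum]]] := zs (fun i => val (nth 0%R s i)).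
  by move=> i; rewrite -[n in _ < n](Zp_cast n_gt1) ltn_ord.
exists I, w; split=> //; split=> //.
apply/eqP; rewrite (eq_bigr (fun i : 'I_(size s) => (val (nth 0%R s i))%:R *+ w i)%R).
  by rewrite Zp_sum_natr_eq0.
by move=> i _; rewrite natr_Zp.
Qed.

Lemma not_zs_property_nat t (f : nat -> nat) :
  ~ weighted_zero_sum (fun i : 'I_t => f i) -> ~ A_zs_property n A t.
Proof.
move=> no_zs zs; apply: no_zs.
pose s := mkseq (fun i => (f i)%:R%R : 'Z_n) t.
have [I [w [I_n0 [wA sum0]]]] := zs s (size_mkseq _ _).
have nth_s (i : 'I_(size s)) : nth 0%R s i = (f i)%:R%R.
  by rewrite nth_mkseq // -(size_mkseq (fun i => (f i)%:R%R : 'Z_n) t).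
move/eqP: sum0; under eq_bigr do rewrite nth_s; rewrite Zp_sum_natr_eq0.
move: I w I_n0 wA; rewrite /s size_mkseq => I w I_n0 wA dvd_sum.
by exists I, w.
Qed.

End ZpWeightedSums.

Lemma dvdn_sum_interval m t (z : 'I_t -> nat) :
  0 < m -> m <= t -> exists I : {set 'I_t}, I != set0 /\ m %| \sum_(i in I) z i.
Proof.
move=> m_gt0 m_le_t; pose prefix (k : nat) := \sum_(i < t | i < k) z i.
have := pigeonhole (fun k : 'I_t.+1 => Ordinal (ltn_pmod (prefix k) m_gt0)).
rewrite !card_ord ltnS => /(_ m_le_t)[k1 [k2 [neq_k eq_mod]]].
wlog lt_k : k1 k2 neq_k eq_mod / k1 < k2.
  move=> W; case: (ltngtP k1 k2) => [|lt_k|eq_k]; first exact: W.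
    by apply: (W k2 k1); rewrite // eq_sym.
  by rewrite (val_inj eq_k) eqxx in neq_k.
have lt_k1 : k1 < t by rewrite (leq_trans lt_k) // -ltnS.
exists [set i : 'I_t | k1 <= i < k2]; split.
  by apply/set0Pn; exists (Ordinal lt_k1); rewrite inE leqnn.
have split_prefix : prefix k2 = prefix k1 + \sum_(i in [set i : 'I_t | k1 <= i < k2]) z i.
  rewrite /prefix (bigID (fun i : 'I_t => i < k1)) /=; congr (_ + _).
    by apply: eq_bigl => i; rewrite andbC; case: ltnP => // /ltn_trans->.
  by apply: eq_bigl => i; rewrite inE -leqNgt andbC.
move/(congr1 val): eq_mod => /= /eqP.
by rewrite split_prefix -{1}[prefix k1]addn0 eqn_modDl mod0n eq_sym.
Qed.

Lemma dvdn_divgcd_mulr n a k : 0 < n -> n %| k * a -> n %/ gcdn a n %| k.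
Proof.
move=> n_gt0 dvd_ka; have g_gt0 : 0 < gcdn a n by rewrite gcdn_gt0 n_gt0 orbT.
rewrite -(dvdn_pmul2r g_gt0) divnK ?dvdn_gcdr //.
by rewrite muln_gcdr dvdn_gcd dvd_ka dvdn_mull.
Qed.

Lemma dA_single_weight n a :
  1 < n -> a \in oint n -> is_dA n (pred1 a) (n %/ gcdn a n).
Proof.
move=> n_gt1 /andP[a_gt0 _]; set g := gcdn a n.
have g_gt0 : 0 < g by rewrite gcdn_gt0 a_gt0.
have ng_gt0 : 0 < n %/ g by rewrite divn_gt0 // dvdn_leq ?dvdn_gcdr // ltnW.
split=> //; split.
- apply: zs_property_nat => // x _.
  have [I [I_n0 dvd_sum]] := dvdn_sum_interval (fun i => x i * (a %/ g)) ng_gt0 (leqnn _).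
  exists I, (fun=> a); split=> // [i _|]; first exact: eqxx.
  rewrite (eq_bigr (fun i => x i * (a %/ g) * g)) => [|i _]; last first.
    by rewrite -mulnA divnK ?dvdn_gcdl.
  by rewrite -big_distrl -{1}(divnK (dvdn_gcdr a n)) dvdn_pmul2r.
- move=> t t_gt0 lt_t; apply: (@not_zs_property_nat _ _ _ _ (fun=> 1)) => //.
  case=> I [w [I_n0 wa]]; rewrite (eq_bigr (fun=> a)); last by move=> i /wa/eqP->; rewrite mul1n.
  rewrite sum_nat_const => /(dvdn_divgcd_mulr (ltnW n_gt1))/dvdn_leq.
  rewrite card_gt0 I_n0 => /(_ isT)/leq_trans/(_ (max_card _)).
  by rewrite card_ord leqNgt lt_t.
Qed.

Lemma eqn_modMl_coprime a m n d :
  coprime a d -> (a * m == a * n %[mod d]) = (m == n %[mod d]).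
Proof.
move=> co_ad; wlog le_nm : m n / n <= m.
  by move=> W; case/orP: (leq_total n m) => [/W//|/W]; rewrite eq_sym => ->; rewrite eq_sym.
by rewrite !eqn_mod_dvd ?leq_mul2l ?le_nm ?orbT // -mulnBr Gauss_dvdr // coprime_sym.
Qed.

Lemma dvdn_pm_weights n a P N : a <= n -> coprime a n ->
  (n %| a * P + (n - a) * N) = (P == N %[mod n]).
Proof.
move=> le_an co_an; rewrite -(eqn_modMl_coprime _ _ co_an) /dvdn -(mod0n n).
by rewrite -(eqn_modDr (a * N)) -addnA -mulnDl subnK // -modnDmr modnMr addn0 add0n.
Qed.

Lemma sum_pow2_lt k (S : {set 'I_k}) : \sum_(i in S) 2 ^ i < 2 ^ k.
Proof.
apply: (@leq_ltn_trans (\sum_(i < k) 2 ^ i)).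
  by rewrite big_mkcond /=; apply: leq_sum => i _; case: ifP.
elim: k {S} => [|k IH]; first by rewrite big_ord0.
by rewrite big_ord_recr /= expnS mul2n -addnn ltn_add2r.
Qed.

Lemma dvdn_sum_pow2 k (S : {set 'I_k}) (j : 'I_k) :
  {in S, forall i : 'I_k, j <= i} -> (2 ^ j.+1 %| \sum_(i in S) 2 ^ i) = (j \notin S).
Proof.
move=> ge_j; have dvd_rest : 2 ^ j.+1 %| \sum_(i in S | i != j) 2 ^ i.
  apply: dvdn_sum => i /andP[Si neq_ij]; rewrite dvdn_exp2l // ltn_neqAle ge_j // andbT.
  by apply: contra neq_ij => /eqP/val_inj->.
have [Sj|nSj] := boolP (j \in S).
  by rewrite (bigD1 j) //= dvdn_addl // dvdn_Pexp2l // ltnn.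
rewrite (eq_bigl (fun i => (i \in S) && (i != j))) ?dvd_rest // => i.
by case: eqP => [->|]; rewrite ?(negPf nSj) ?andbT.
Qed.

Lemma sum_pow2_disjoint k (S1 S2 : {set 'I_k}) : [disjoint S1 & S2] ->
  \sum_(i in S1) 2 ^ i = \sum_(i in S2) 2 ^ i -> S1 :|: S2 = set0.
Proof.
move=> dis_S eq_sum; apply/eqP/negPn/negP => /set0Pn[i0 U_i0].
case: (arg_minnP (fun i : 'I_k => nat_of_ord i) U_i0) => j Uj min_j.
have ge_j (S : {set 'I_k}) : S \subset S1 :|: S2 -> {in S, forall i : 'I_k, j <= i}.
  by move=> /subsetP sub_S i /sub_S; apply: min_j.
have := dvdn_sum_pow2 (ge_j S1 (subsetUl _ _)).
rewrite eq_sum (dvdn_sum_pow2 (ge_j S2 (subsetUr _ _))).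
have : j \in S1 :|: S2 := Uj; rewrite inE => /orP[] Sj.
  by rewrite Sj (disjointFr dis_S Sj).
by rewrite Sj (disjointFl dis_S Sj).
Qed.

Lemma dA_pm_weights n a : 1 < n -> a \in oint n -> coprime a n ->
  is_dA n [pred x : nat | (x == a) || (x == n - a)] (1 + trunc_log 2 n).
Proof.
move=> n_gt1 /andP[_ le_an] co_an; have n_gt0 := ltnW n_gt1.
split=> //; split.
- apply: zs_property_nat => // x _.
  have := pigeonhole (fun S : {set 'I_(1 + trunc_log 2 n)} =>
                        Ordinal (ltn_pmod (\sum_(i in S) x i) n_gt0)).
  rewrite card_sets !card_ord => /(_ (trunc_log_ltn _ _))[//|S1 [S2 [neq_S eq_mod]]].
  exists (symdiff S1 S2), (fun i => if i \in S1 then a else n - a); split.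
  + by rewrite symdiff_eq0.
  + by move=> i _; rewrite inE; case: (i \in S1); rewrite eqxx ?orbT.
  + rewrite (eq_bigr (fun i => if i \in S1 then x i * a else x i * (n - a))); last first.
      by move=> i _; case: (i \in S1).
    rewrite sum_symdiff -!big_distrl /= mulnC [_ * (n - a)]mulnC dvdn_pm_weights //.
    move/(congr1 val): eq_mod => /= /eqP.
    by rewrite (big_setID (A := S1) S2) (big_setID (A := S2) S1) setIC eqn_modDl.
- move=> t t_gt0 lt_t; apply: (@not_zs_property_nat _ _ _ _ (expn 2)) => //.
  case=> I [w [I_n0 wA]].
  have pow_le : 2 ^ t <= n.
    by apply: leq_trans (trunc_logP (leqnn 2) n_gt0); rewrite leq_exp2l // -ltnS -add1n.
  pose S1 := [set i | w i == a].
  rewrite (big_setID (A := I) S1) /= (eq_bigr (fun i : 'I_t => 2 ^ i * a)); last first.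
    by move=> i; rewrite !inE => /andP[_ /eqP->].
  rewrite [X in _ + X](eq_bigr (fun i : 'I_t => 2 ^ i * (n - a))) => [|i]; last first.
    by rewrite !inE => /andP[/negPf wi_a /wA]; rewrite inE wi_a => /eqP->.
  rewrite -!big_distrl /= [_ * a]mulnC [_ * (n - a)]mulnC dvdn_pm_weights //.
  rewrite !modn_small ?(leq_trans (sum_pow2_lt _) pow_le) // => /eqP eq_sum.
  move: I_n0; rewrite -(setID I S1) (sum_pow2_disjoint _ eq_sum) ?eqxx //.
  by rewrite -setI_eq0; apply/eqP/setP => i; rewrite !inE; case: (w i == a); rewrite ?andbF.
Qed.

(* [plev p e y = min (v_p(y), e)]; in particular [plev p e 0 = e]. *)
Definition plev p e y := logn p (gcdn y (p ^ e)).

Section PLevel.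

Variables (p e : nat).
Hypothesis p_pr : prime p.

Lemma gcdn_plev y : gcdn y (p ^ e) = p ^ plev p e y.
Proof.
rewrite /plev; have [m _ ->] := dvdn_pfactor _ _ p_pr (dvdn_gcdr y (p ^ e)).
by rewrite pfactorK.
Qed.

Lemma dvdn_plev y : p ^ plev p e y %| y.
Proof. by rewrite -gcdn_plev dvdn_gcdl. Qed.

Lemma plev_le y : plev p e y <= e.
Proof. by rewrite -(dvdn_Pexp2l _ _ (prime_gt1 p_pr)) -gcdn_plev dvdn_gcdr. Qed.

Lemma dvdn_plev_ge y : e <= plev p e y -> p ^ e %| y.
Proof. by move=> le_e; rewrite -{1}(@anti_leq (plev p e y) e) ?plev_le ?le_e ?dvdn_plev. Qed.

Lemma coprime_plev y : plev p e y < e -> coprime (y %/ p ^ plev p e y) p.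
Proof.
have dvd_l := dvdn_plev y; set l := plev p e y in dvd_l * => lt_e.
rewrite coprime_sym prime_coprime //; apply/negP => dvd_p.
have : p ^ l.+1 %| gcdn y (p ^ e).
  rewrite dvdn_gcd dvdn_Pexp2l ?prime_gt1 // lt_e andbT.
  by rewrite expnS -(divnK dvd_l) dvdn_pmul2r ?expn_gt0 ?prime_gt0.
by rewrite gcdn_plev dvdn_Pexp2l ?prime_gt1 // ltnn.
Qed.

End PLevel.

Lemma dvdn_pair_weights p e l y z : prime p -> plev p e y = l -> plev p e z = l ->
  p ^ e %| y * (z %/ p ^ l) + z * ((p ^ e).-1 * (y %/ p ^ l)).
Proof.
move=> p_pr ly lz; have pl_gt0 : 0 < p ^ l by rewrite expn_gt0 prime_gt0.
have /dvdnP[ry ->] : p ^ l %| y by rewrite -ly dvdn_plev.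
have /dvdnP[rz ->] : p ^ l %| z by rewrite -lz dvdn_plev.
rewrite !mulnK //; set q := (p ^ e).-1.
have -> : ry * p ^ l * rz + rz * p ^ l * (q * ry) = ry * rz * p ^ l * q.+1 by ring.
by rewrite prednK ?expn_gt0 ?prime_gt0 // dvdn_mull.
Qed.

Lemma odd_card_setD (T : finType) (A B : {set T}) :
  B \subset A -> odd #|A :\: B| = odd #|A| (+) odd #|B|.
Proof. by move=> sub_BA; rewrite cardsD (setIidPr sub_BA) oddB ?subset_leq_card. Qed.

Lemma dvdn_sum_glue d (T : finType) (C D : {set T}) (x a b : T -> nat) :
  D \subset C -> d %| \sum_(i in D) x i * b i -> d %| \sum_(i in C :\: D) x i * a i ->
  d %| \sum_(i in C) x i * (if i \in D then b i else a i).
Proof.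
move=> sub_DC dvd_D dvd_CD; rewrite (big_setID (A := C) D) (setIidPr sub_DC) /=.
rewrite (eq_bigr (fun i => x i * b i)) => [|i ->] //.
rewrite [X in _ + X](eq_bigr (fun i => x i * a i)) => [|i]; last first.
  by rewrite inE => /andP[/negPf->].
exact: dvdn_add.
Qed.

Section Pairing.

Variables (p e : nat) (T : finType) (x : T -> nat).
Hypothesis p_pr : prime p.
Implicit Types (C D : {set T}) (i : T).

Definition level_class (C : {set T}) l := [set k in C | plev p e (x k) == l].

Definition even_levels (C : {set T}) := forall l, l < e -> ~~ odd #|level_class C l|.

Lemma level_block C i : i \in C -> even_levels C ->
  exists D (b : T -> nat), [/\ i \in D, D \subset C, forall k, coprime (b k) p,
    p ^ e %| \sum_(k in D) x k * b k & even_levels D].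
Proof.
move=> Ci even_C; set l := plev p e (x i).
have [le_el|lt_le] := leqP e l.
  exists [set i], (fun=> 1); split=> [||k||l' lt_l']; rewrite ?set11 ?sub1set //.
  - exact: coprime1n.
  - by rewrite big_set1 muln1 dvdn_plev_ge.
  rewrite (_ : level_class _ _ = set0) ?cards0 //.
  apply/setP => k; rewrite !inE; case: eqP => // ->.
  by rewrite -/l gtn_eqF // (leq_trans lt_l').
have Xi : i \in level_class C l by rewrite inE Ci eqxx.
have /set0Pn[j] : level_class C l :\ i != set0.
  apply: contra (even_C l lt_le) => /eqP X0.
  by rewrite (cardsD1 i) Xi X0 cards0.
rewrite !inE => /and3P[neq_ji Cj /eqP lj].
exists [set i; j], (fun k => if k == i then x j %/ p ^ l else (p ^ e).-1 * (x i %/ p ^ l)).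
split.
- by rewrite !inE eqxx.
- by rewrite subUset !sub1set Ci Cj.
- move=> k; case: eqP => _; first by rewrite -lj coprime_plev // lj.
  rewrite coprimeMl coprime_plev // andbT.
  apply: (@coprime_dvdr _ (p ^ e)); last by rewrite coprimePn ?expn_gt0 ?prime_gt0.
  by rewrite -{1}(expn1 p) dvdn_exp2l // (leq_ltn_trans (leq0n _) lt_le).
- rewrite big_setU1 ?inE 1?eq_sym // big_set1 eqxx (negPf neq_ji).
  exact: dvdn_pair_weights.
- move=> l' _; have -> : level_class [set i; j] l' = if l == l' then [set i; j] else set0.
    apply/setP => k; case: ifP => [/eqP<-|/negbT ne_l]; rewrite !inE.
      by apply: andb_idr => /orP[]/eqP->; rewrite ?lj.
    by apply/negP => /andP[/orP[]/eqP-> ]; rewrite ?lj (negPf ne_l).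
  by case: (l == l'); rewrite ?cards0 // cards2 eq_sym neq_ji.
Qed.

Lemma pairing_weights C : even_levels C ->
  exists a : T -> nat, (forall i, coprime (a i) p) /\ p ^ e %| \sum_(i in C) x i * a i.
Proof.
elim: {C}_.+1 {-2}C (ltnSn #|C|) => // m IH C; rewrite ltnS => card_C even_C.
have [->|[i Ci]] := set_0Vmem C.
  by exists (fun=> 1); split=> [i|]; rewrite ?coprime1n ?big_set0 ?dvdn0.
have [D [b [Di DC b_p dvd_D even_D]]] := level_block Ci even_C.
have [||a [a_p dvd_CD]] := IH (C :\: D).
- rewrite (leq_trans _ card_C) // -(cardsID D C) (setIidPr DC) -add1n leq_add2r.
  by rewrite card_gt0; apply/set0Pn; exists i.
- move=> l lt_l; have sub_l : level_class D l \subset level_class C l.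
    by apply/subsetP => k; rewrite !inE => /andP[/(subsetP DC)-> ->].
  have -> : level_class (C :\: D) l = level_class C l :\: level_class D l.
    by apply/setP => k; rewrite !inE; case: (k \in D); case: (k \in C); case: (_ == l).
  by rewrite odd_card_setD // (negPf (even_C l lt_l)) (negPf (even_D l lt_l)).
exists (fun k => if k \in D then b k else a k); split.
  by move=> k; case: ifP.
exact: dvdn_sum_glue.
Qed.

End Pairing.

Lemma coprime_primes m n : 0 < n -> (forall q, q \in primes n -> coprime m q) -> coprime m n.
Proof.
move=> n_gt0 co_mq; apply: contraT => not_co.
have g_gt1 : 1 < gcdn m n.
  by rewrite ltn_neqAle gcdn_gt0 n_gt0 orbT andbT eq_sym; exact: not_co.
have q_pr := pdiv_prime g_gt1; have := pdiv_dvd (gcdn m n).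
rewrite dvdn_gcd => /andP[q_m q_n].
have /co_mq : pdiv (gcdn m n) \in primes n by rewrite mem_primes q_pr n_gt0 q_n.
by rewrite coprime_sym prime_coprime // q_m.
Qed.

Lemma crt_weights n (T : finType) (x : T -> nat) (C : {set T}) (a : nat -> T -> nat) :
  0 < n -> (forall p i, p \in primes n -> coprime (a p i) p) ->
  (forall p, p \in primes n -> p ^ logn p n %| \sum_(i in C) x i * a p i) ->
  exists W : T -> nat, (forall i, coprime (W i) n) /\ n %| \sum_(i in C) x i * W i.
Proof.
move=> n_gt0 a_p dvd_a; pose M p := n %/ p ^ logn p n.
have M_n p : M p * p ^ logn p n = n by rewrite divnK ?pfactor_dvdnn.
exists (fun i => \sum_(p <- primes n) M p * a p i); split.
- move=> i; apply: coprime_primes => // q q_n.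
  move: (q_n); rewrite mem_primes => /and3P[q_pr _ q_dvd].
  have [m co_qm def_n] := pfactor_coprime q_pr n_gt0.
  have M_q : M q = m by rewrite /M {1}def_n mulnK ?expn_gt0 ?prime_gt0.
  rewrite (bigD1_seq q) ?primes_uniq //= M_q.
  have /dvdnP[c ->] : q %| \sum_(p <- primes n | p != q) M p * a p i.
    rewrite big_seq_cond; apply: dvdn_sum => p /andP[p_n neq_pq]; apply: dvdn_mulr.
    have p_pr := allP (all_prime_primes n) p p_n.
    have co_qp : coprime q (p ^ logn p n).
      by rewrite coprimeXr // prime_coprime // dvdn_prime2 // eq_sym.
    by rewrite -(Gauss_dvdl _ co_qp) M_n.
  by rewrite -coprime_modl addnC modnMDl coprime_modl coprimeMl coprime_sym co_qm a_p.
- rewrite (eq_bigr (fun i => \sum_(p <- primes n) M p * (x i * a p i))) => [|i _]; last first.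
    by rewrite big_distrr; apply: eq_bigr => p _; rewrite mulnCA.
  rewrite exchange_big big_seq dvdn_sum // => p p_n; rewrite -big_distrr /= -{1}(M_n p).
  exact: dvdn_mul (dvdnn _) (dvd_a p p_n).
Qed.

Lemma card_prime_levels n :
  #|{: {p : seq_sub (primes n) & 'I_(logn (val p) n)}}| = bigOmega n.
Proof.
rewrite card_tagged sumnE big_map /bigOmega -[in RHS](val_seq_sub_enum (primes_uniq n)).
by rewrite big_map Finite.enum.unlock /= big_map; apply: eq_bigr => p _; rewrite card_ord.
Qed.

Lemma even_levels_subset n t (x : 'I_t -> nat) : bigOmega n < t ->
  exists I : {set 'I_t}, I != set0 /\
    forall p, p \in primes n -> even_levels p (logn p n) x I.
Proof.
move=> lt_t.
pose sig (S : {set 'I_t}) : {ffun {p : seq_sub (primes n) & 'I_(logn (val p) n)} -> bool} :=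
  [ffun pl : {p : seq_sub (primes n) & 'I_(logn (val p) n)} =>
     odd #|level_class (val (tag pl)) (logn (val (tag pl)) n) x S (tagged pl)|].
have := pigeonhole sig; rewrite card_sets card_ffun card_bool card_prime_levels card_ord.
rewrite ltn_exp2l // => /(_ lt_t)[S1 [S2 [neq_S eq_sig]]].
exists (symdiff S1 S2); split; first by rewrite symdiff_eq0.
move=> p p_n l lt_l.
have := congr1 (fun f : {ffun {p : seq_sub (primes n) & 'I_(logn (val p) n)} -> bool} =>
                 f (existT _ (SeqSub p_n) (Ordinal lt_l))) eq_sig.
rewrite !ffunE /= => eq_odd.
by rewrite /level_class setIdE setI_symdiff -!setIdE odd_card_symdiff eq_odd addbb.
Qed.

Lemma divisor_chain_ndvd n t (d : nat -> nat) (I : {set 'I_t}) (w : 'I_t -> nat) :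
  (forall i, 0 < d i) -> (forall i j, i <= j -> d i %| d j) ->
  (forall i, i < t -> d i < d i.+1) -> d t %| n ->
  I != set0 -> {in I, forall i, coprime (w i) n} -> ~~ (n %| \sum_(i in I) d i * w i).
Proof.
move=> d_gt0 d_dvd d_lt d_n /set0Pn[i0 Ii0] w_co; apply/negP => dvd_sum.
case: (arg_minnP (fun i : 'I_t => nat_of_ord i) Ii0) => j Ij min_j.
set q := d j.+1 %/ d j.
have def_dj1 : d j.+1 = d j * q by rewrite mulnC divnK ?d_dvd.
have dj1_n : d j.+1 %| n by rewrite (dvdn_trans (d_dvd _ _ (ltn_ord j))).
have q_w : q %| w j.
  have rest : d j.+1 %| \sum_(i in I | i != j) d i * w i.
    apply: dvdn_sum => i /andP[Ii neq_ij]; apply: dvdn_mulr; apply: d_dvd.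
    by rewrite ltn_neqAle min_j // andbT; apply: contra neq_ij => /eqP/val_inj->.
  rewrite -(dvdn_pmul2l (d_gt0 j)) -def_dj1.
  by move: (dvdn_trans dj1_n dvd_sum); rewrite (bigD1 j) //= dvdn_addl.
have : q %| gcdn (w j) n.
  by rewrite dvdn_gcd q_w (dvdn_trans _ dj1_n) // def_dj1 dvdn_mull.
rewrite (eqP (w_co j Ij)) dvdn1 => /eqP q1.
by have := d_lt j (ltn_ord j); rewrite def_dj1 q1 muln1 ltnn.
Qed.

Definition prime_factor_seq n := flatten [seq nseq (logn p n) p | p <- primes n].

Definition prime_factor_prefix n i := \prod_(p <- take i (prime_factor_seq n)) p.

Lemma size_prime_factor_seq n : size (prime_factor_seq n) = bigOmega n.
Proof.
rewrite size_flatten /shape -map_comp sumnE big_map /bigOmega.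
by apply: eq_bigr => p _ /=; rewrite size_nseq.
Qed.

Lemma prime_factor_seq_prime n p : p \in prime_factor_seq n -> prime p.
Proof.
case/flattenP => _ /mapP[q q_n ->]; rewrite mem_nseq => /andP[_ /eqP->].
by move: q_n; rewrite mem_primes => /andP[].
Qed.

Lemma prime_factor_prefix_gt0 n i : 0 < prime_factor_prefix n i.
Proof.
rewrite /prime_factor_prefix big_seq prodn_cond_gt0 // => p /mem_take.
by move/prime_factor_seq_prime/prime_gt0.
Qed.

Lemma prime_factor_prefix_dvd n i j :
  i <= j -> prime_factor_prefix n i %| prime_factor_prefix n j.
Proof.
move=> le_ij; rewrite /prime_factor_prefix -(cat_take_drop i (take j _)) take_takel //.
by rewrite big_cat dvdn_mulr.
Qed.

Lemma prime_factor_prefix_lt n i : i < bigOmega n ->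
  prime_factor_prefix n i < prime_factor_prefix n i.+1.
Proof.
rewrite -size_prime_factor_seq => lt_i.
rewrite /prime_factor_prefix (take_nth 0 lt_i) -cats1 big_cat big_seq1 /=.
rewrite ltn_Pmulr ?prime_gt1 ?(prime_factor_seq_prime (mem_nth 0 lt_i)) //.
exact: prime_factor_prefix_gt0.
Qed.

Lemma prime_factor_prefix_Omega n : 0 < n -> prime_factor_prefix n (bigOmega n) = n.
Proof.
move=> n_gt0; rewrite /prime_factor_prefix -size_prime_factor_seq take_size.
rewrite {2}(prod_prime_decomp n_gt0) prime_decompE big_map big_flatten /= big_map.
by apply: eq_bigr => p _; rewrite big_nseq iter_muln_1.
Qed.

Lemma dvdn_sum_modr n (T : finType) (I : {set T}) (x w : T -> nat) :
  n %| \sum_(i in I) x i * w i -> n %| \sum_(i in I) x i * (w i %% n).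
Proof.
move=> dvd_sum; rewrite /dvdn -modn_summ (eq_bigr (fun i => x i * w i %% n)).
  by rewrite modn_summ.
by move=> i _; rewrite modnMmr.
Qed.

Lemma dA_unit_weights n :
  1 < n -> is_dA n [pred a : nat | (a \in oint n) && coprime a n] (1 + bigOmega n).
Proof.
move=> n_gt1; have n_gt0 := ltnW n_gt1; split=> //; split.
- apply: zs_property_nat => // x _.
  have [I [I_n0 even_I]] := even_levels_subset x (ltnSn (bigOmega n)).
  (* Finite functions form a choiceType, so [xchoose] picks weights for every p. *)
  have pick p : exists a : {ffun 'I_(1 + bigOmega n) -> nat}, (p \in primes n) ==>
      [forall i, coprime (a i) p] && (p ^ logn p n %| \sum_(i in I) x i * a i).
    have [p_n|] := boolP (p \in primes n); last by exists [ffun=> 0].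
    have p_pr := allP (all_prime_primes n) p p_n.
    have [a [a_p dvd_a]] := pairing_weights p_pr (even_I p p_n).
    exists [ffun i => a i]; apply/andP; split; first by apply/forallP => i; rewrite ffunE.
    by under eq_bigr do rewrite ffunE.
  have [||W [W_n dvd_W]] :=
    crt_weights (x := x) (C := I) (a := fun p => xchoose (pick p)) n_gt0.
  + by move=> p i /(implyP (xchooseP (pick p)))/andP[/forallP].
  + by move=> p /(implyP (xchooseP (pick p)))/andP[].
  exists I, (fun i => W i %% n); split=> // [i _|]; last exact: dvdn_sum_modr.
  rewrite inE /= coprime_modl W_n andbT inE (ltnW (ltn_pmod _ n_gt0)) andbT lt0n.
  apply: contraTneq (W_n i) => W0.
  by rewrite -coprime_modl W0 /coprime gcd0n gtn_eqF.
- move=> t t_gt0 lt_t.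
  apply: (@not_zs_property_nat _ _ _ _ (prime_factor_prefix n)) => //.
  case=> I [w [I_n0 w_co]].
  apply/negP/(divisor_chain_ndvd (prime_factor_prefix_gt0 n)) => //.
  - exact: prime_factor_prefix_dvd.
  - by move=> i lt_i; rewrite prime_factor_prefix_lt // (leq_trans lt_i) // -ltnS -add1n.
  - by rewrite -{2}(prime_factor_prefix_Omega n_gt0) prime_factor_prefix_dvd // -ltnS -add1n.
  - by move=> i /w_co/andP[].
Qed.

Lemma dA_nonzero_weights n : 1 < n -> is_dA n (oint (n - 1)) 2.
Proof.
move=> n_gt1; have one_w : 1 \in oint (n - 1) by rewrite inE /= subn_gt0.
split=> //; split.
- apply: zs_property_nat => // x x_lt.
  have single (i : 'I_2) : x i = 0 -> weighted_zero_sum n (oint (n - 1)) x.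
    move=> xi0; exists [set i], (fun=> 1); split.
    + by apply/set0Pn; exists i; rewrite set11.
    + by move=> ? _.
    + by rewrite big_set1 xi0.
  have [x0|x0_gt0] := posnP (x ord0); first exact: single x0.
  have [x1|x1_gt0] := posnP (x ord_max); first exact: single x1.
  exists setT, (fun i => if i == ord0 then x ord_max else n - x ord0); split.
  + by apply/set0Pn; exists ord0.
  + move=> i _; rewrite inE /=; case: eqP => _.
      by rewrite x1_gt0 leq_subRL ?add1n ?x_lt // ltnW.
    by rewrite subn_gt0 x_lt leq_sub2l.
  + rewrite (eq_bigl xpredT) => [|i]; last by rewrite inE.
    rewrite big_ord_recr big_ord1 /=.
    have -> : widen_ord (leqnSn 1) ord0 = ord0 by apply: val_inj.
    by rewrite mulnBr mulnC subnKC ?dvdn_mull // leq_mul2l ltnW ?x_lt ?orbT.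
- move=> t t_gt0 lt_t; have {t_gt0 lt_t}-> : t = 1 by apply/eqP; rewrite eqn_leq -ltnS lt_t.
  apply: (@not_zs_property_nat _ _ _ _ (fun=> 1)) => // [[I [w [I_n0 wA]]]].
  have /set0Pn[i Ii] := I_n0; have {}I_n0 : I = [set i].
    by apply/setP => j; rewrite in_set1 !ord1 eqxx; move: Ii; rewrite ord1.
  rewrite I_n0 big_set1 mul1n; have /andP[w_gt0 w_lt] := wA i Ii.
  by move/(dvdn_leq w_gt0); rewrite leqNgt (leq_ltn_trans w_lt) // subn1 prednK // ltnW.
Qed.

Theorem theorem2 (n : nat) (Hn1 : (1 < n)%N) (Hcomp : ~~ prime n) :
  (forall a : nat, a \in oint n -> is_dA n (pred1 a) (n %/ gcdn a n)%N) /\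
  (forall a : nat, a \in oint n -> coprime a n ->
     is_dA n [pred x : nat | (x == a) || (x == n - a)%N] (1 + trunc_log 2 n)%N) /\
  is_dA n [pred a : nat | (a \in oint n) && coprime a n] (1 + bigOmega n)%N /\
  is_dA n (oint (n - 1)) 2.
Proof.
split; first by move=> a; apply: dA_single_weight.
split; first by move=> a; apply: dA_pm_weights.
by split; [apply: dA_unit_weights | apply: dA_nonzero_weights].
Qed.
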